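(* Let $M_1,M_2$ be primitive monoids, $N_i$ an order-ideal of $M_i$ ($i=1,2$), and suppose $M_1/N_1\cong M_2/N_2\cong S$. Let $P$ be the pullback of the resulting maps $M_1\to S\leftarrow M_2$. Assume that $p\lhd q$ for all $p\in\mathbb P(N_i)$ and all $q\in\mathbb P(M_i)\setminus\mathbb P(N_i)$, $i=1,2$. Then $P$ is a primitive monoid, $P$ has an order-ideal $N\cong N_1\times N_2$ with $P/N\cong S$, and $\mathbb P(P)=\mathbb P(S)\sqcup\mathbb P(N_1)\sqcup\mathbb P(N_2)$, where the relation $\lhd$ on $\mathbb P(P)$ is given by the relations $\lhd$ of $S$, $N_1$ and $N_2$ on the respective pieces together with $p\lhd q$ for all $p\in\mathbb P(N_1)\sqcup\mathbb P(N_2)$ and $q\in\mathbb P(S)$.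
   Context: Monoids are abelian. A prime is $p$ with $p\not\le0$ and $p\le a+b\Rightarrow p\le a$ or $p\le b$ (algebraic preorder $x\le y$ iff $y=x+z$); a primitive monoid is a primely generated antisymmetric refinement monoid, and $\mathbb P(M)$ denotes its set of primes. For primes, $q\lhd p$ means $p+q=p$; a primitive monoid is determined up to isomorphism by $(\mathbb P(M),\lhd)$. An order-ideal is a nonempty $I$ with $x+y\in I\iff x,y\in I$; $M/I$ is the quotient by $x\equiv y\iff x+u=y+v$ for some $u,v\in I$, and $\mathbb P(N)=\mathbb P(M)\cap N$. The quotient $M/N$ of a primitive monoid is primitive with primes identified with $\mathbb P(M)\setminus\mathbb P(N)$. The pullback of $f_1\colon M_1\to S$, $f_2\colon M_2\to S$ is $\{(x,y)\in M_1\times M_2: f_1(x)=f_2(y)\}$. *)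

From Stdlib Require Import List ProofIrrelevance.
Set Implicit Arguments.

Record cmonoid := CMonoid {
  car :> Type;
  zero : car;
  add : car -> car -> car;
  addA : forall x y z, add (add x y) z = add x (add y z);
  addC : forall x y, add x y = add y x;
  add0 : forall x, add zero x = x
}.
Arguments zero {c}.
Arguments add {c} _ _.

Section Basics.
Variable M : cmonoid.

Definition le (x y : M) : Prop := exists z, y = add x z.

Definition prime (p : M) : Prop :=
  ~ le p zero /\ forall a b : M, le p (add a b) -> le p a \/ le p b.

Definition lhd (q p : M) : Prop := add p q = p.

Definition antisymmetric : Prop := forall x y : M, le x y -> le y x -> x = y.

Definition refinement : Prop :=
  forall a0 a1 b0 b1 : M, add a0 a1 = add b0 b1 ->
  exists c00 c01 c10 c11 : M,
    a0 = add c00 c01 /\ a1 = add c10 c11 /\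
    b0 = add c00 c10 /\ b1 = add c01 c11.

Definition sum_list (l : list M) : M := fold_right add zero l.

Definition primely_generated : Prop :=
  forall x : M, exists l : list M, Forall prime l /\ x = sum_list l.

Definition primitive : Prop :=
  primely_generated /\ antisymmetric /\ refinement.

Definition order_ideal (I : M -> Prop) : Prop :=
  (exists x, I x) /\ forall x y : M, I (add x y) <-> (I x /\ I y).

(** the congruence defining M/I *)
Definition ideal_cong (I : M -> Prop) (x y : M) : Prop :=
  exists u v : M, I u /\ I v /\ add x u = add y v.
End Basics.
Arguments le {M} x y.
Arguments prime {M} p.
Arguments lhd {M} q p.
Arguments order_ideal {M} I.
Arguments ideal_cong {M} I x y.
Arguments sum_list {M} l.

Definition is_hom (M S : cmonoid) (f : M -> S) : Prop :=
  f zero = zero /\ forall x y, f (add x y) = add (f x) (f y).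
Arguments is_hom {M S} f.

(** [g : M -> S] induces an isomorphism M/I ~= S: g is a surjective
    homomorphism whose kernel congruence is exactly the congruence of M/I. *)
Definition quotient_map (M S : cmonoid) (I : M -> Prop) (g : M -> S) : Prop :=
  is_hom g /\ (forall s : S, exists x, g x = s) /\
  forall x y, g x = g y <-> ideal_cong I x y.
Arguments quotient_map {M S} I g.

Definition prod_monoid (M1 M2 : cmonoid) : cmonoid.
Proof.
  refine (@CMonoid (M1 * M2) (zero, zero)
            (fun x y => (add (fst x) (fst y), add (snd x) (snd y))) _ _ _).
  - intros [a b] [c d] [e f]; simpl; now rewrite !addA.
  - intros [a b] [c d]; simpl; now rewrite (addC _ a), (addC _ b).
  - intros [a b]; simpl; now rewrite !add0.
Defined.

Definition sub_iso (M M' : cmonoid) (A : M -> Prop) (B : M' -> Prop) (h : M -> M') : Prop :=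
  (forall x, A x -> B (h x)) /\
  (forall y, B y -> exists x, A x /\ h x = y) /\
  (forall x y, A x -> A y -> h x = h y -> x = y) /\
  h zero = zero /\
  (forall x y, A x -> A y -> h (add x y) = add (h x) (h y)).
Arguments sub_iso {M M'} A B h.

Section Pullback.
Variables (M1 M2 S : cmonoid) (f1 : M1 -> S) (f2 : M2 -> S).
Hypotheses (hf1 : is_hom f1) (hf2 : is_hom f2).

Definition pb_car := { xy : M1 * M2 | f1 (fst xy) = f2 (snd xy) }.

Definition pb_zero : pb_car.
Proof.
  exists (zero, zero); simpl. destruct hf1 as [-> _]; destruct hf2 as [-> _]; reflexivity.
Defined.

Definition pb_add (x y : pb_car) : pb_car.
Proof.
  destruct x as [[a b] hx], y as [[c d] hy].
  exists (add a c, add b d); simpl in *.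
  destruct hf1 as [_ ->]; destruct hf2 as [_ ->]; now rewrite hx, hy.
Defined.

Definition pullback : cmonoid.
Proof.
  refine (@CMonoid pb_car pb_zero pb_add _ _ _).
  - intros [[a b] h1] [[c d] h2] [[u v] h3]; apply eq_sig_hprop;
      [intros; apply proof_irrelevance|]; simpl; now rewrite !addA.
  - intros [[a b] h1] [[c d] h2]; apply eq_sig_hprop;
      [intros; apply proof_irrelevance|]; simpl; now rewrite (addC _ a), (addC _ b).
  - intros [[a b] h1]; apply eq_sig_hprop;
      [intros; apply proof_irrelevance|]; simpl; now rewrite !add0.
Defined.
End Pullback.
Arguments pullback {M1 M2 S f1 f2} hf1 hf2.

Definition prime_pieces (S M1 M2 : cmonoid) (N1 : M1 -> Prop) (N2 : M2 -> Prop) : Type :=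
  ({ s : S | prime s } + ({ a : M1 | N1 a /\ prime a } + { b : M2 | N2 b /\ prime b }))%type.
Arguments prime_pieces S {M1 M2} N1 N2.

Definition glued_lhd (S M1 M2 : cmonoid) (N1 : M1 -> Prop) (N2 : M2 -> Prop)
  (x y : prime_pieces S N1 N2) : Prop :=
  match x, y with
  | inl s, inl t => lhd (proj1_sig s) (proj1_sig t)
  | inr (inl a), inr (inl b) => lhd (proj1_sig a) (proj1_sig b)
  | inr (inr a), inr (inr b) => lhd (proj1_sig a) (proj1_sig b)
  | inr _, inl _ => True
  | _, _ => False
  end.
Arguments glued_lhd {S M1 M2 N1 N2} x y.

(** Let [P] be the pullback of [f1 : M1 -> S <- M2 : f2], where [fi]
    presents [S] as [Mi/Ni], and let [N] be the elements of [P] whose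
    coordinates lie in [N1] and [N2] (so [N] is [N1 x N2]).
    - The hypothesis on [<|] makes each [Ni] absorbing ([x + n = x] for [n]
      in [Ni] and [x] outside it). A quotient by an absorbing ideal is
      injective and order-reflecting off the ideal; [P -> S] inherits this.
    - One criterion describes all primes: a surjective homomorphism that
      reflects the order at [x0] preserves and reflects primality of [x0].
      Applied to [P -> S] off [N] and to the coordinate projections at lifts
      of elements of [M1] and [M2], it identifies the primes of [P] with
      [P(S) + P(N1) + P(N2)].
    - [P] is primitive: prime decompositions lift, antisymmetry holds
      coordinatewise, and refinement is done coordinatewise inside [N] and
      otherwise in [M1] followed by lifting.
    - [<|] is computed in [S] off [N], coordinatewise inside [N], and by
      absorption across. *)

From Stdlib Require Import List ProofIrrelevance Classical ClassicalEpsilon.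
Set Implicit Arguments.

Section MonoidFacts.
Context {M : cmonoid}.

Lemma add0r (x : M) : add x zero = x.
Proof. rewrite addC. apply add0. Qed.

Lemma le_refl (x : M) : le x x.
Proof. exists zero. now rewrite add0r. Qed.

Lemma le_0 (x : M) : le zero x.
Proof. exists x. now rewrite add0. Qed.

Lemma le_addr (x y : M) : le x (add x y).
Proof. now exists y. Qed.

Lemma prime_nonzero (p : M) : prime p -> p <> zero.
Proof. intros [H _] ->. apply H, le_refl. Qed.

Lemma le_zero_eq (x : M) : antisymmetric M -> le x zero -> x = zero.
Proof. intros anti H. apply anti; [exact H|apply le_0]. Qed.

Lemma lhd_zero (x : M) : lhd x zero -> x = zero.
Proof. unfold lhd. now rewrite add0. Qed.

Lemma lhd_le (q p : M) : lhd q p -> le q p.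
Proof. intros E. exists p. now rewrite addC, E. Qed.

Lemma le_sum_In (l : list M) (q : M) : In q l -> le q (sum_list l).
Proof.
  induction l as [|a l IH]; simpl; [tauto|].
  intros [->|Hq]; [apply le_addr|].
  destruct (IH Hq) as [r ->]. exists (add a r).
  now rewrite <- !addA, (addC _ a q).
Qed.

Lemma lhd_sum (l : list M) (q : M) :
  Forall (fun p => lhd p q) l -> lhd (sum_list l) q.
Proof.
  unfold lhd. induction 1 as [|p l Hp _ IH]; simpl; [apply add0r|].
  now rewrite <- addA, Hp.
Qed.
End MonoidFacts.

Lemma hom_le (M S : cmonoid) (f : M -> S) (x y : M) :
  is_hom f -> le x y -> le (f x) (f y).
Proof. intros hf [z ->]. exists (f z). apply (proj2 hf). Qed.

(** Primality transfers along a surjective homomorphism [pi] at any point [x0]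
    at which [pi] reflects the order. This single criterion yields every
    description of primes of the pullback below. *)
Lemma prime_iff_reflect (X M : cmonoid) (pi : X -> M) (x0 : X) :
  is_hom pi -> (forall m : M, exists y, pi y = m) ->
  (forall y, le (pi x0) (pi y) -> le x0 y) ->
  prime x0 <-> prime (pi x0).
Proof.
  intros hpi hsurj hrefl. split.
  - intros [Hnz Hp]. split.
    + intros H. apply Hnz, hrefl. now rewrite (proj1 hpi).
    + intros a b Hab.
      destruct (hsurj a) as [A <-], (hsurj b) as [B <-].
      rewrite <- (proj2 hpi) in Hab.
      destruct (Hp A B (hrefl _ Hab)) as [H|H]; [left|right]; exact (hom_le hpi H).
  - intros [Hnz Hp]. split.
    + intros H. apply Hnz. rewrite <- (proj1 hpi). exact (hom_le hpi H).
    + intros A B HAB. apply (hom_le hpi) in HAB. rewrite (proj2 hpi) in HAB.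
      destruct (Hp _ _ HAB) as [H|H]; [left|right]; exact (hrefl _ H).
Qed.

Section OrderIdeal.
Variables (M : cmonoid) (N : M -> Prop).
Hypothesis hN : order_ideal N.

Lemma ideal_add (x y : M) : N (add x y) <-> N x /\ N y.
Proof. apply (proj2 hN). Qed.

Lemma ideal_zero : N zero.
Proof.
  destruct (proj1 hN) as [x Hx]. apply (proj1 (ideal_add zero x)). now rewrite add0.
Qed.

Lemma ideal_le (x y : M) : le x y -> N y -> N x.
Proof. intros [z ->] H. now apply ideal_add in H. Qed.

Lemma ideal_sum_out (l : list M) :
  ~ N (sum_list l) -> exists q, In q l /\ ~ N q.
Proof.
  induction l as [|a l IH]; simpl; intros H.
  - exfalso. apply H, ideal_zero.
  - destruct (classic (N a)) as [Ha|Ha]; [|now exists a; auto].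
    destruct IH as [q [Hq Hnq]]; [intros Hl; apply H, ideal_add; auto|].
    exists q; auto.
Qed.

Lemma ideal_Forall (l : list M) : N (sum_list l) -> Forall N l.
Proof.
  intros H. apply Forall_forall. intros x Hx. exact (ideal_le (le_sum_In _ _ Hx) H).
Qed.
End OrderIdeal.

Definition prime_sum {M : cmonoid} (x : M) : Prop :=
  exists l : list M, Forall prime l /\ x = sum_list l.

Lemma prime_sum_prime (M : cmonoid) (p : M) : prime p -> prime_sum p.
Proof.
  intros Hp. exists (p :: nil).
  split; [exact (Forall_cons _ Hp (Forall_nil _))|simpl; now rewrite add0r].
Qed.

Lemma prime_sum_add (M : cmonoid) (x y : M) :
  prime_sum x -> prime_sum y -> prime_sum (add x y).
Proof.
  intros [l [Pl ->]] [k [Pk ->]]. exists (l ++ k). split; [now apply Forall_app|].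
  clear Pl Pk. induction l as [|a l IH]; simpl; [now rewrite add0|].
  now rewrite addA, IH.
Qed.

(** * Absorbing ideals *)

(** [N] is absorbing: adding an element of [N] to an element outside [N]
    does not change it. This is what makes a quotient by [N] injective off [N]. *)
Definition absorbing {M : cmonoid} (N : M -> Prop) : Prop :=
  forall x n : M, N n -> ~ N x -> add x n = x.

Lemma absorbing_of_lhd (M : cmonoid) (N : M -> Prop) :
  primely_generated M -> order_ideal N ->
  (forall p q : M, prime p -> N p -> prime q -> ~ N q -> lhd p q) ->
  absorbing N.
Proof.
  intros pg hN hl x n Hn Hx.
  destruct (pg x) as [l [Pl ->]], (pg n) as [ln [Pln ->]].
  destruct (ideal_sum_out hN l Hx) as [q [Hq Hnq]].
  assert (Hqn : lhd (sum_list ln) q).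
  { pose proof (ideal_Forall hN ln Hn) as HNln.
    apply lhd_sum. rewrite Forall_forall in *. intros p Hp. apply hl; auto. }
  destruct (le_sum_In _ _ Hq) as [r ->].
  unfold lhd in Hqn. now rewrite addA, (addC _ r), <- addA, Hqn.
Qed.

Lemma quotient_map_intro (X S : cmonoid) (N : X -> Prop) (g : X -> S) :
  order_ideal N -> is_hom g -> (forall s : S, exists x, g x = s) ->
  (forall x, N x <-> g x = zero) ->
  (forall x y, g x = g y -> ~ N x -> ~ N y -> x = y) ->
  quotient_map N g.
Proof.
  intros hN hg hsurj hker hinj. split; [exact hg|split; [exact hsurj|]].
  intros x y. split.
  - intros E. destruct (classic (N x)) as [Hx|Hx], (classic (N y)) as [Hy|Hy].
    + exists y, x. repeat split; auto. apply addC.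
    + exfalso. apply Hy, hker. rewrite <- E. now apply hker.
    + exfalso. apply Hx, hker. rewrite E. now apply hker.
    + rewrite (hinj x y E Hx Hy). exists zero, zero.
      split; [exact (ideal_zero hN)|split; [exact (ideal_zero hN)|reflexivity]].
  - intros [u [v [Hu [Hv E]]]]. apply (f_equal g) in E.
    rewrite !(proj2 hg), (proj1 (hker u) Hu), (proj1 (hker v) Hv), !add0r in E.
    exact E.
Qed.

Section AbsorbingQuotient.
Variables (X S : cmonoid) (N : X -> Prop) (g : X -> S).
Hypotheses (hN : order_ideal N) (hg : quotient_map N g) (habs : absorbing N).

Lemma quotient_kernel (x : X) : N x <-> g x = zero.
Proof.
  destruct hg as [[hg0 _] [_ hcong]]. rewrite <- hg0, hcong. split.
  - intros Hx. exists zero, x.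
    split; [exact (ideal_zero hN)|split; [exact Hx|now rewrite add0, add0r]].
  - intros [u [v [_ [Hv E]]]]. rewrite add0 in E. subst v.
    now apply (ideal_add hN) in Hv.
Qed.

Lemma quotient_inj (x y : X) : g x = g y -> ~ N x -> ~ N y -> x = y.
Proof.
  intros E Hx Hy. apply (proj2 (proj2 hg)) in E.
  destruct E as [u [v [Hu [Hv E]]]]. now rewrite (habs Hu Hx), (habs Hv Hy) in E.
Qed.

Lemma quotient_le_reflect (z c : X) : ~ N z -> le (g z) (g c) -> le z c.
Proof.
  intros Hz [s Es]. destruct (proj1 (proj2 hg) s) as [t <-].
  rewrite <- (proj2 (proj1 hg)) in Es.
  assert (Hzt : ~ N (add z t)) by (intros H; apply (ideal_add hN) in H; tauto).
  assert (Hc : ~ N c)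
    by (intros H; apply Hzt, quotient_kernel; rewrite <- Es; now apply quotient_kernel).
  exists t. exact (quotient_inj Es Hc Hzt).
Qed.

Lemma quotient_prime (z : X) : ~ N z -> (prime z <-> prime (g z)).
Proof.
  intros Hz. apply prime_iff_reflect.
  - exact (proj1 hg).
  - exact (proj1 (proj2 hg)).
  - intros y. now apply quotient_le_reflect.
Qed.
End AbsorbingQuotient.

Definition refines {M : cmonoid} (a0 a1 b0 b1 : M) : Prop :=
  exists c00 c01 c10 c11 : M,
    a0 = add c00 c01 /\ a1 = add c10 c11 /\ b0 = add c00 c10 /\ b1 = add c01 c11.

Lemma refines_swap_left (M : cmonoid) (a0 a1 b0 b1 : M) :
  refines a0 a1 b0 b1 -> refines a1 a0 b0 b1.
Proof.
  intros [c00 [c01 [c10 [c11 [E0 [E1 [F0 F1]]]]]]].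
  exists c10, c11, c00, c01. rewrite F0, F1. repeat split; auto; apply addC.
Qed.

Lemma refines_swap_right (M : cmonoid) (a0 a1 b0 b1 : M) :
  refines a0 a1 b0 b1 -> refines a0 a1 b1 b0.
Proof.
  intros [c00 [c01 [c10 [c11 [E0 [E1 [F0 F1]]]]]]].
  exists c01, c00, c11, c10. rewrite E0, E1. repeat split; auto; apply addC.
Qed.

Lemma refinement_by_cases (M : cmonoid) (N : M -> Prop) :
  order_ideal N ->
  (forall a0 a1 b0 b1 : M, N a0 -> N a1 -> N b0 -> N b1 ->
     add a0 a1 = add b0 b1 -> refines a0 a1 b0 b1) ->
  (forall a0 a1 b0 b1 : M, ~ N a0 -> ~ N b0 ->
     add a0 a1 = add b0 b1 -> refines a0 a1 b0 b1) ->
  refinement M.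
Proof.
  intros hN Hin Hout a0 a1 b0 b1 E.
  destruct (classic (N (add a0 a1))) as [HN|HN].
  - assert (HB := HN). rewrite E in HB.
    apply (ideal_add hN) in HN. apply (ideal_add hN) in HB. now apply Hin.
  - assert (HA : ~ N a0 \/ ~ N a1) by (apply not_and_or; now rewrite <- ideal_add).
    assert (HB : ~ N b0 \/ ~ N b1)
      by (apply not_and_or; rewrite <- (ideal_add hN); now rewrite <- E).
    destruct HA as [Ha|Ha], HB as [Hb|Hb].
    + now apply Hout.
    + apply refines_swap_right, Hout; auto. now rewrite (addC _ b1).
    + apply refines_swap_left, Hout; auto. now rewrite (addC _ a1).
    + apply refines_swap_left, refines_swap_right, Hout; auto.
      now rewrite (addC _ a1), (addC _ b1).
Qed.

(** * The pullback [P] of [M1 -> S <- M2] *)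

Section Pullback.
Variables (M1 M2 S : cmonoid) (N1 : M1 -> Prop) (N2 : M2 -> Prop)
  (f1 : M1 -> S) (f2 : M2 -> S).
Hypotheses (hM1 : primitive M1) (hM2 : primitive M2)
  (hN1 : order_ideal N1) (hN2 : order_ideal N2)
  (hf1 : is_hom f1) (hf2 : is_hom f2)
  (hq1 : quotient_map N1 f1) (hq2 : quotient_map N2 f2)
  (hlhd1 : forall p q : M1, prime p -> N1 p -> prime q -> ~ N1 q -> lhd p q)
  (hlhd2 : forall p q : M2, prime p -> N2 p -> prime q -> ~ N2 q -> lhd p q).

Notation P := (pullback hf1 hf2).

Let habs1 : absorbing N1 := absorbing_of_lhd (proj1 hM1) hN1 hlhd1.
Let habs2 : absorbing N2 := absorbing_of_lhd (proj1 hM2) hN2 hlhd2.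

Definition pb1 (Z : P) : M1 := fst (proj1_sig Z).
Definition pb2 (Z : P) : M2 := snd (proj1_sig Z).
Definition pb_pair (Z : P) : prod_monoid M1 M2 := (pb1 Z, pb2 Z).

Lemma pb_compat (Z : P) : f1 (pb1 Z) = f2 (pb2 Z).
Proof. exact (proj2_sig Z). Qed.

Lemma pb_ext (Z W : P) : pb1 Z = pb1 W -> pb2 Z = pb2 W -> Z = W.
Proof.
  destruct Z as [[a b] hZ], W as [[c d] hW]; unfold pb1, pb2; simpl.
  intros -> ->. f_equal. apply proof_irrelevance.
Qed.

Lemma pb1_hom : is_hom pb1.
Proof. split; [reflexivity|]. now intros [[a b] ?] [[c d] ?]. Qed.

Lemma pb2_hom : is_hom pb2.
Proof. split; [reflexivity|]. now intros [[a b] ?] [[c d] ?]. Qed.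

Definition pb_mk (x : M1) (y : M2) : P :=
  match excluded_middle_informative (f1 x = f2 y) with
  | left h => exist _ (x, y) h
  | right _ => zero
  end.

Lemma pb_mk_fst (x : M1) (y : M2) : f1 x = f2 y -> pb1 (pb_mk x y) = x.
Proof. intros h. unfold pb_mk. now destruct excluded_middle_informative. Qed.

Lemma pb_mk_snd (x : M1) (y : M2) : f1 x = f2 y -> pb2 (pb_mk x y) = y.
Proof. intros h. unfold pb_mk. now destruct excluded_middle_informative. Qed.

Lemma kernel1 (x : M1) : N1 x <-> f1 x = zero.
Proof. exact (quotient_kernel hN1 hq1 x). Qed.

Lemma kernel2 (y : M2) : N2 y <-> f2 y = zero.
Proof. exact (quotient_kernel hN2 hq2 y). Qed.

Lemma kernel_compat (x : M1) (y : M2) : N1 x -> N2 y -> f1 x = f2 y.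
Proof. rewrite kernel1, kernel2. congruence. Qed.

Definition pb_ideal (Z : P) : Prop := N1 (pb1 Z) /\ N2 (pb2 Z).
Definition pb_quot (Z : P) : S := f1 (pb1 Z).

Lemma pb_quot_snd (Z : P) : pb_quot Z = f2 (pb2 Z).
Proof. apply pb_compat. Qed.

(** By compatibility, one coordinate in its ideal forces the other. *)
Lemma pb_ideal_kernel (Z : P) : pb_ideal Z <-> pb_quot Z = zero.
Proof.
  unfold pb_ideal. rewrite kernel1, kernel2, <- pb_compat. fold (pb_quot Z). tauto.
Qed.

Lemma pb_ideal_fst (Z : P) : pb_ideal Z <-> N1 (pb1 Z).
Proof. rewrite pb_ideal_kernel, kernel1. reflexivity. Qed.

Lemma pb_ideal_snd (Z : P) : pb_ideal Z <-> N2 (pb2 Z).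
Proof. rewrite pb_ideal_kernel, kernel2, pb_quot_snd. reflexivity. Qed.

Lemma pb_ideal_order_ideal : order_ideal pb_ideal.
Proof.
  split.
  - exists zero. split; [exact (ideal_zero hN1)|exact (ideal_zero hN2)].
  - intros Z W. unfold pb_ideal.
    rewrite (proj2 pb1_hom), (proj2 pb2_hom), (ideal_add hN1), (ideal_add hN2). tauto.
Qed.

Lemma pb_quot_hom : is_hom pb_quot.
Proof.
  unfold pb_quot. split.
  - rewrite (proj1 pb1_hom). apply (proj1 hf1).
  - intros Z W. rewrite (proj2 pb1_hom). apply (proj2 hf1).
Qed.

Lemma pb_quot_surj (s : S) : exists Z : P, pb_quot Z = s.
Proof.
  destruct (proj1 (proj2 hq1) s) as [x hx], (proj1 (proj2 hq2) s) as [y hy].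
  exists (pb_mk x y). unfold pb_quot. rewrite pb_mk_fst; congruence.
Qed.

Lemma pb_eq_off (Z W : P) : ~ pb_ideal Z -> pb_quot Z = pb_quot W -> Z = W.
Proof.
  intros HZ E.
  assert (HW : ~ pb_ideal W) by (rewrite pb_ideal_kernel in *; congruence).
  apply pb_ext.
  - apply (quotient_inj hq1 habs1 _ _ E); now rewrite <- pb_ideal_fst.
  - rewrite !pb_quot_snd in E.
    apply (quotient_inj hq2 habs2 _ _ E); now rewrite <- pb_ideal_snd.
Qed.

Lemma pb_absorbing : absorbing pb_ideal.
Proof.
  intros Z W [HW1 HW2] HZ. apply pb_ext; rewrite ?(proj2 pb1_hom), ?(proj2 pb2_hom).
  - apply habs1; [exact HW1|now rewrite <- pb_ideal_fst].
  - apply habs2; [exact HW2|now rewrite <- pb_ideal_snd].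
Qed.

Lemma pb_quotient : quotient_map pb_ideal pb_quot.
Proof.
  apply quotient_map_intro.
  - exact pb_ideal_order_ideal.
  - exact pb_quot_hom.
  - exact pb_quot_surj.
  - exact pb_ideal_kernel.
  - intros Z W E HZ _. exact (pb_eq_off HZ E).
Qed.

Lemma pb_decompose1 (Y U V : P) :
  pb1 Y = add (pb1 U) (pb1 V) -> (pb_ideal Y -> pb2 Y = add (pb2 U) (pb2 V)) ->
  Y = add U V.
Proof.
  intros E1 E2. destruct (classic (pb_ideal Y)) as [HY|HY].
  - apply pb_ext; rewrite ?(proj2 pb1_hom), ?(proj2 pb2_hom); auto.
  - apply pb_eq_off; [exact HY|].
    rewrite (proj2 pb_quot_hom). unfold pb_quot. rewrite E1. apply (proj2 hf1).
Qed.

Lemma pb_decompose2 (Y U V : P) :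
  pb2 Y = add (pb2 U) (pb2 V) -> (pb_ideal Y -> pb1 Y = add (pb1 U) (pb1 V)) ->
  Y = add U V.
Proof.
  intros E2 E1. destruct (classic (pb_ideal Y)) as [HY|HY].
  - apply pb_ext; rewrite ?(proj2 pb1_hom), ?(proj2 pb2_hom); auto.
  - apply pb_eq_off; [exact HY|].
    rewrite (proj2 pb_quot_hom), !pb_quot_snd, E2. apply (proj2 hf2).
Qed.

Definition sec1 (s : S) : M1 :=
  proj1_sig (constructive_indefinite_description _ (proj1 (proj2 hq1) s)).
Definition sec2 (s : S) : M2 :=
  proj1_sig (constructive_indefinite_description _ (proj1 (proj2 hq2) s)).

Lemma sec1_spec (s : S) : f1 (sec1 s) = s.
Proof. unfold sec1. now destruct constructive_indefinite_description. Qed.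

Lemma sec2_spec (s : S) : f2 (sec2 s) = s.
Proof. unfold sec2. now destruct constructive_indefinite_description. Qed.

Definition lift1 (a : M1) : P :=
  if excluded_middle_informative (N1 a) then pb_mk a zero else pb_mk a (sec2 (f1 a)).
Definition lift2 (b : M2) : P :=
  if excluded_middle_informative (N2 b) then pb_mk zero b else pb_mk (sec1 (f2 b)) b.

Lemma lift1_fst (a : M1) : pb1 (lift1 a) = a.
Proof.
  unfold lift1. destruct excluded_middle_informative as [Ha|Ha]; apply pb_mk_fst.
  - apply kernel_compat; [exact Ha|exact (ideal_zero hN2)].
  - now rewrite sec2_spec.
Qed.

Lemma lift1_snd (a : M1) : N1 a -> pb2 (lift1 a) = zero.
Proof.
  intros Ha. unfold lift1. destruct excluded_middle_informative; [|contradiction].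
  apply pb_mk_snd, kernel_compat; [exact Ha|exact (ideal_zero hN2)].
Qed.

Lemma lift2_snd (b : M2) : pb2 (lift2 b) = b.
Proof.
  unfold lift2. destruct excluded_middle_informative as [Hb|Hb]; apply pb_mk_snd.
  - apply kernel_compat; [exact (ideal_zero hN1)|exact Hb].
  - now rewrite sec1_spec.
Qed.

Lemma lift2_fst (b : M2) : N2 b -> pb1 (lift2 b) = zero.
Proof.
  intros Hb. unfold lift2. destruct excluded_middle_informative; [|contradiction].
  apply pb_mk_fst, kernel_compat; [exact (ideal_zero hN1)|exact Hb].
Qed.

Lemma lift1_reflect (a : M1) (Y : P) : le a (pb1 Y) -> le (lift1 a) Y.
Proof.
  intros [z Ez]. destruct (classic (pb_ideal Y)) as [HY|HY].
  - assert (Haz : N1 a /\ N1 z) by (apply (ideal_add hN1); rewrite <- Ez; apply HY).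
    exists (pb_mk z (pb2 Y)).
    assert (Hc : f1 z = f2 (pb2 Y)) by (apply kernel_compat; [apply Haz|apply HY]).
    apply pb_decompose1.
    + now rewrite lift1_fst, pb_mk_fst.
    + intros _. rewrite lift1_snd, pb_mk_snd by tauto. now rewrite add0.
  - exists (lift1 z). apply pb_decompose1; [now rewrite !lift1_fst|contradiction].
Qed.

Lemma lift2_reflect (b : M2) (Y : P) : le b (pb2 Y) -> le (lift2 b) Y.
Proof.
  intros [z Ez]. destruct (classic (pb_ideal Y)) as [HY|HY].
  - assert (Hbz : N2 b /\ N2 z) by (apply (ideal_add hN2); rewrite <- Ez; apply HY).
    exists (pb_mk (pb1 Y) z).
    assert (Hc : f1 (pb1 Y) = f2 z) by (apply kernel_compat; [apply HY|apply Hbz]).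
    apply pb_decompose2.
    + now rewrite lift2_snd, pb_mk_snd.
    + intros _. rewrite lift2_fst, pb_mk_fst by tauto. now rewrite add0.
  - exists (lift2 z). apply pb_decompose2; [now rewrite !lift2_snd|contradiction].
Qed.

Lemma prime_lift1 (a : M1) : prime (lift1 a) <-> prime a.
Proof.
  rewrite <- (lift1_fst a) at 2. apply prime_iff_reflect.
  - exact pb1_hom.
  - intros m. exists (lift1 m). apply lift1_fst.
  - intros Y. rewrite lift1_fst. apply lift1_reflect.
Qed.

Lemma prime_lift2 (b : M2) : prime (lift2 b) <-> prime b.
Proof.
  rewrite <- (lift2_snd b) at 2. apply prime_iff_reflect.
  - exact pb2_hom.
  - intros m. exists (lift2 m). apply lift2_snd.
  - intros Y. rewrite lift2_snd. apply lift2_reflect.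
Qed.

Lemma pb_ideal_split (Z : P) :
  pb_ideal Z -> Z = add (lift1 (pb1 Z)) (lift2 (pb2 Z)).
Proof.
  intros [H1 H2]. apply pb_ext; rewrite ?(proj2 pb1_hom), ?(proj2 pb2_hom).
  - now rewrite lift1_fst, lift2_fst, add0r.
  - now rewrite lift2_snd, lift1_snd, add0.
Qed.

Lemma pb_prime_in_ideal (Z : P) : pb_ideal Z -> prime Z ->
  (pb2 Z = zero /\ prime (pb1 Z)) \/ (pb1 Z = zero /\ prime (pb2 Z)).
Proof.
  intros HZ PZ. pose proof HZ as [H1 H2].
  destruct (proj2 PZ (lift1 (pb1 Z)) (lift2 (pb2 Z))) as [H|H].
  { rewrite <- pb_ideal_split by exact HZ. apply le_refl. }
  - apply (hom_le pb2_hom) in H. rewrite lift1_snd in H by exact H1.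
    apply le_zero_eq in H; [|exact (proj1 (proj2 hM2))].
    assert (EZ : Z = lift1 (pb1 Z))
      by (apply pb_ext; [now rewrite lift1_fst|now rewrite lift1_snd]).
    left. split; [exact H|]. apply prime_lift1. now rewrite <- EZ.
  - apply (hom_le pb1_hom) in H. rewrite lift2_fst in H by exact H2.
    apply le_zero_eq in H; [|exact (proj1 (proj2 hM1))].
    assert (EZ : Z = lift2 (pb2 Z))
      by (apply pb_ext; [now rewrite lift2_fst|now rewrite lift2_snd]).
    right. split; [exact H|]. apply prime_lift2. now rewrite <- EZ.
Qed.

(** ** [P] is primitive *)

Lemma pb_antisymmetric : antisymmetric P.
Proof.
  intros Z W HZW HWZ. apply pb_ext.
  - apply (proj1 (proj2 hM1)); now apply (hom_le pb1_hom).
  - apply (proj1 (proj2 hM2)); now apply (hom_le pb2_hom).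
Qed.

Lemma lift1_prime_sum (l : list M1) : Forall prime l ->
  exists W : P, prime_sum W /\ pb1 W = sum_list l /\ (Forall N1 l -> pb2 W = zero).
Proof.
  induction 1 as [|p l Hp _ [W [GW [EW1 EW2]]]].
  - exists zero. split; [exists nil; split; auto|]. split; reflexivity.
  - exists (add (lift1 p) W). split; [|split].
    + apply prime_sum_add; [|exact GW]. now apply prime_sum_prime, prime_lift1.
    + now rewrite (proj2 pb1_hom), lift1_fst, EW1.
    + intros HN. inversion HN; subst.
      now rewrite (proj2 pb2_hom), lift1_snd, EW2, add0.
Qed.

Lemma lift2_prime_sum (l : list M2) : Forall prime l -> Forall N2 l ->
  exists W : P, prime_sum W /\ pb1 W = zero /\ pb2 W = sum_list l.
Proof.
  induction 1 as [|p l Hp _ IH]; intros HN.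
  - exists zero. split; [exists nil; split; auto|]. split; reflexivity.
  - inversion HN as [|? ? Np HNl]; subst.
    destruct (IH HNl) as [W [GW [EW1 EW2]]].
    exists (add (lift2 p) W). split; [|split].
    + apply prime_sum_add; [|exact GW]. now apply prime_sum_prime, prime_lift2.
    + now rewrite (proj2 pb1_hom), lift2_fst, EW1, add0.
    + now rewrite (proj2 pb2_hom), lift2_snd, EW2.
Qed.

Lemma pb_primely_generated : primely_generated P.
Proof.
  intros Z. destruct (proj1 hM1 (pb1 Z)) as [l1 [P1 E1]].
  destruct (lift1_prime_sum P1) as [W1 [[k1 [K1 G1]] [F1 S1]]].
  destruct (classic (pb_ideal Z)) as [HZ|HZ].
  - destruct (proj1 hM2 (pb2 Z)) as [l2 [P2 E2]].
    assert (HN1 : Forall N1 l1) by (apply ideal_Forall; [exact hN1|rewrite <- E1; apply HZ]).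
    assert (HN2 : Forall N2 l2) by (apply ideal_Forall; [exact hN2|rewrite <- E2; apply HZ]).
    destruct (lift2_prime_sum P2 HN2) as [W2 [GW2 [F2 S2]]].
    assert (EZ : Z = add W1 W2).
    { apply pb_ext; rewrite ?(proj2 pb1_hom), ?(proj2 pb2_hom).
      - now rewrite F1, F2, add0r.
      - rewrite S1 by exact HN1. now rewrite S2, add0. }
    rewrite EZ. apply prime_sum_add; [exists k1; split; auto|exact GW2].
  - exists k1. split; [exact K1|]. rewrite <- G1.
    apply pb_eq_off; [exact HZ|]. unfold pb_quot. now rewrite F1, E1.
Qed.

Lemma pb_refines_ideal (A0 A1 B0 B1 : P) :
  pb_ideal A0 -> pb_ideal A1 -> pb_ideal B0 -> pb_ideal B1 ->
  add A0 A1 = add B0 B1 -> refines A0 A1 B0 B1.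
Proof.
  intros [HA01 HA02] [HA11 HA12] _ _ E.
  assert (E1 := f_equal pb1 E). rewrite !(proj2 pb1_hom) in E1.
  assert (E2 := f_equal pb2 E). rewrite !(proj2 pb2_hom) in E2.
  destruct (proj2 (proj2 hM1) _ _ _ _ E1) as [c00 [c01 [c10 [c11 [Ea0 [Ea1 [Eb0 Eb1]]]]]]].
  destruct (proj2 (proj2 hM2) _ _ _ _ E2) as [d00 [d01 [d10 [d11 [Fa0 [Fa1 [Fb0 Fb1]]]]]]].
  rewrite Ea0, (ideal_add hN1) in HA01. rewrite Ea1, (ideal_add hN1) in HA11.
  rewrite Fa0, (ideal_add hN2) in HA02. rewrite Fa1, (ideal_add hN2) in HA12.
  assert (mk_fst : forall x y, N1 x -> N2 y -> pb1 (pb_mk x y) = x)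
    by (intros; apply pb_mk_fst, kernel_compat; assumption).
  assert (mk_snd : forall x y, N1 x -> N2 y -> pb2 (pb_mk x y) = y)
    by (intros; apply pb_mk_snd, kernel_compat; assumption).
  exists (pb_mk c00 d00), (pb_mk c01 d01), (pb_mk c10 d10), (pb_mk c11 d11).
  repeat split; apply pb_ext; rewrite ?(proj2 pb1_hom), ?(proj2 pb2_hom),
    ?mk_fst, ?mk_snd by tauto; assumption.
Qed.

Definition lift_at (c : M1) (Y : P) : P :=
  if excluded_middle_informative (pb_ideal Y) then pb_mk c (pb2 Y) else lift1 c.

Lemma lift_at_spec (c : M1) (Y : P) : le c (pb1 Y) ->
  pb1 (lift_at c Y) = c /\ (pb_ideal Y -> pb2 (lift_at c Y) = pb2 Y).
Proof.
  intros Hc. unfold lift_at. destruct excluded_middle_informative as [HY|HY].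
  - assert (Hcomp : f1 c = f2 (pb2 Y))
      by (apply kernel_compat; [exact (ideal_le hN1 Hc (proj1 HY))|apply HY]).
    split; [now apply pb_mk_fst|intros _; now apply pb_mk_snd].
  - split; [apply lift1_fst|contradiction].
Qed.

(** An equation whose left summands on both sides avoid [N] is refined by
    refining its first coordinate in [M1] and lifting. *)
Lemma pb_refines_off (A0 A1 B0 B1 : P) :
  ~ pb_ideal A0 -> ~ pb_ideal B0 ->
  add A0 A1 = add B0 B1 -> refines A0 A1 B0 B1.
Proof.
  intros HA0 HB0 E. assert (E1 := f_equal pb1 E). rewrite !(proj2 pb1_hom) in E1.
  destruct (proj2 (proj2 hM1) _ _ _ _ E1) as [c00 [c01 [c10 [c11 [Ea0 [Ea1 [Eb0 Eb1]]]]]]].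
  destruct (@lift_at_spec c01 B1) as [F01 G01]; [rewrite Eb1; apply le_addr|].
  destruct (@lift_at_spec c10 A1) as [F10 G10]; [rewrite Ea1; apply le_addr|].
  (* [c11] lies below [pb1 A1] and [pb1 B1]; when these are in [N1], the lift
     of [c11] contributes nothing to the second coordinate. *)
  assert (L11 : forall Y, le c11 (pb1 Y) -> pb_ideal Y -> pb2 (lift1 c11) = zero).
  { intros Y Hc HY. apply lift1_snd. exact (ideal_le hN1 Hc (proj1 HY)). }
  exists (lift1 c00), (lift_at c01 B1), (lift_at c10 A1), (lift1 c11).
  split; [|split; [|split]]; apply pb_decompose1; rewrite ?lift1_fst, ?F01, ?F10;
    try assumption; try contradiction.
  - intros HA1. rewrite G10, (L11 A1), add0r; auto.
    rewrite Ea1, addC. apply le_addr.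
  - intros HB1. rewrite G01, (L11 B1), add0r; auto.
    rewrite Eb1, addC. apply le_addr.
Qed.

Lemma pb_primitive : primitive P.
Proof.
  split; [exact pb_primely_generated|split; [exact pb_antisymmetric|]].
  exact (refinement_by_cases pb_ideal_order_ideal pb_refines_ideal pb_refines_off).
Qed.

Lemma pb_sub_iso :
  sub_iso pb_ideal (fun z : prod_monoid M1 M2 => N1 (fst z) /\ N2 (snd z)) pb_pair.
Proof.
  split; [|split; [|split; [|split]]].
  - intros Z HZ. exact HZ.
  - intros [a b] [Ha Hb]. simpl in Ha, Hb.
    assert (Hc : f1 a = f2 b) by (now apply kernel_compat).
    exists (pb_mk a b). unfold pb_ideal, pb_pair.
    now rewrite pb_mk_fst, pb_mk_snd.
  - intros Z W _ _ E. injection E as E1 E2. exact (pb_ext _ _ E1 E2).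
  - reflexivity.
  - intros Z W _ _. unfold pb_pair. now rewrite (proj2 pb1_hom), (proj2 pb2_hom).
Qed.

(** ** The primes of [P] *)

Definition prime_elt : Type := {p : P | prime p}.

Lemma prime_off_ideal (Z : P) : prime Z -> ~ pb_ideal Z -> prime (pb_quot Z).
Proof.
  intros PZ HZ.
  exact (proj1 (quotient_prime pb_ideal_order_ideal pb_quotient pb_absorbing _ HZ) PZ).
Qed.

Lemma prime_in_ideal1 (Z : P) :
  prime Z -> pb_ideal Z -> pb2 Z = zero -> N1 (pb1 Z) /\ prime (pb1 Z).
Proof.
  intros PZ HZ H2. split; [apply HZ|].
  destruct (pb_prime_in_ideal HZ PZ) as [[_ H]|[_ H]]; [exact H|].
  rewrite H2 in H. now destruct (prime_nonzero H).
Qed.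

Lemma prime_in_ideal2 (Z : P) :
  prime Z -> pb_ideal Z -> pb2 Z <> zero -> N2 (pb2 Z) /\ prime (pb2 Z).
Proof.
  intros PZ HZ H2. split; [apply HZ|].
  destruct (pb_prime_in_ideal HZ PZ) as [[H _]|[_ H]]; [contradiction|exact H].
Qed.

Definition phi (p : prime_elt) : prime_pieces S N1 N2 :=
  match excluded_middle_informative (pb_ideal (proj1_sig p)) with
  | right h => inl (exist _ (pb_quot (proj1_sig p)) (prime_off_ideal (proj2_sig p) h))
  | left h =>
    match excluded_middle_informative (pb2 (proj1_sig p) = zero) with
    | left h2 =>
        inr (inl (exist _ (pb1 (proj1_sig p)) (prime_in_ideal1 (proj2_sig p) h h2)))
    | right h2 =>
        inr (inr (exist _ (pb2 (proj1_sig p)) (prime_in_ideal2 (proj2_sig p) h h2)))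
    end
  end.

Lemma phi_spec (p : prime_elt) :
  match phi p with
  | inl s => ~ pb_ideal (proj1_sig p) /\ pb_quot (proj1_sig p) = proj1_sig s
  | inr (inl a) => pb_ideal (proj1_sig p) /\ pb_pair (proj1_sig p) = (proj1_sig a, zero)
  | inr (inr b) => pb_ideal (proj1_sig p) /\ pb_pair (proj1_sig p) = (zero, proj1_sig b)
  end.
Proof.
  unfold phi, pb_pair. destruct excluded_middle_informative as [h|h]; [|now split].
  destruct excluded_middle_informative as [h2|h2]; simpl; split; auto.
  - f_equal. exact h2.
  - destruct (pb_prime_in_ideal h (proj2_sig p)) as [[H _]|[H _]]; [contradiction|].
    f_equal. exact H.
Qed.

Definition pick (s : S) : P :=
  proj1_sig (constructive_indefinite_description _ (pb_quot_surj s)).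

Lemma pick_spec (s : S) : pb_quot (pick s) = s.
Proof. unfold pick. now destruct constructive_indefinite_description. Qed.

Lemma pick_off (s : S) : prime s -> ~ pb_ideal (pick s).
Proof. intros Ps. rewrite pb_ideal_kernel, pick_spec. exact (prime_nonzero Ps). Qed.

Lemma pick_prime (s : S) : prime s -> prime (pick s).
Proof.
  intros Ps. apply (quotient_prime pb_ideal_order_ideal pb_quotient pb_absorbing).
  - exact (pick_off Ps).
  - now rewrite pick_spec.
Qed.

Definition phi_inv (x : prime_pieces S N1 N2) : prime_elt :=
  match x with
  | inl s => exist _ (pick (proj1_sig s)) (pick_prime (proj2_sig s))
  | inr (inl a) =>
      exist _ (lift1 (proj1_sig a)) (proj2 (prime_lift1 _) (proj2 (proj2_sig a)))
  | inr (inr b) =>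
      exist _ (lift2 (proj1_sig b)) (proj2 (prime_lift2 _) (proj2 (proj2_sig b)))
  end.

Lemma prime_elt_eq (p q : prime_elt) : proj1_sig p = proj1_sig q -> p = q.
Proof. intros E. apply eq_sig_hprop; [intros; apply proof_irrelevance|exact E]. Qed.

Lemma phi_inv_phi (p : prime_elt) : phi_inv (phi p) = p.
Proof.
  pose proof (phi_spec p) as Hp.
  destruct (phi p) as [s|[a|b]]; apply prime_elt_eq; simpl; destruct Hp as [Np Vp];
    unfold pb_pair in Vp.
  - symmetry. apply pb_eq_off; [exact Np|]. now rewrite pick_spec.
  - injection Vp as V1 V2. apply pb_ext.
    + now rewrite lift1_fst.
    + rewrite lift1_snd; [easy|exact (proj1 (proj2_sig a))].
  - injection Vp as V1 V2. apply pb_ext.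
    + rewrite lift2_fst; [easy|exact (proj1 (proj2_sig b))].
    + now rewrite lift2_snd.
Qed.

Lemma phi_phi_inv (x : prime_pieces S N1 N2) : phi (phi_inv x) = x.
Proof.
  destruct x as [[s Ps]|[[a [Na Pa]]|[b [Nb Pb]]]]; unfold phi; simpl.
  - destruct excluded_middle_informative as [h|h]; [now destruct (pick_off Ps h)|].
    f_equal. apply eq_sig_hprop; [intros; apply proof_irrelevance|]. apply pick_spec.
  - assert (Ha : pb_ideal (lift1 a)) by (apply pb_ideal_fst; now rewrite lift1_fst).
    destruct excluded_middle_informative as [h|h]; [|contradiction].
    destruct excluded_middle_informative as [h2|h2]; [|now destruct (h2 (lift1_snd Na))].
    do 2 f_equal. apply eq_sig_hprop; [intros; apply proof_irrelevance|]. apply lift1_fst.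
  - assert (Hb : pb_ideal (lift2 b)) by (apply pb_ideal_snd; now rewrite lift2_snd).
    destruct excluded_middle_informative as [h|h]; [|contradiction].
    destruct excluded_middle_informative as [h2|h2].
    + exfalso. rewrite lift2_snd in h2. exact (prime_nonzero Pb h2).
    + do 2 f_equal. apply eq_sig_hprop; [intros; apply proof_irrelevance|]. apply lift2_snd.
Qed.

(** ** The relation [<|] on the primes of [P] *)

Lemma lhd_coords (Q Z : P) : lhd Q Z <-> lhd (pb1 Q) (pb1 Z) /\ lhd (pb2 Q) (pb2 Z).
Proof.
  unfold lhd. split.
  - intros E. rewrite <- (proj2 pb1_hom), <- (proj2 pb2_hom). now rewrite E.
  - intros [E1 E2]. apply pb_ext; now rewrite ?(proj2 pb1_hom), ?(proj2 pb2_hom).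
Qed.

Lemma phi_lhd (p q : prime_elt) :
  lhd (proj1_sig q) (proj1_sig p) <-> glued_lhd (phi q) (phi p).
Proof.
  pose proof (phi_spec p) as Hp. pose proof (phi_spec q) as Hq.
  destruct (phi q) as [t|[a'|b']], (phi p) as [s|[a|b]]; simpl;
    destruct Hp as [Np Vp], Hq as [Nq Vq]; unfold pb_pair in *;
    try (injection Vp as Vp1 Vp2); try (injection Vq as Vq1 Vq2).
  - unfold lhd. rewrite <- Vp, <- Vq, <- (proj2 pb_quot_hom). split.
    + intros E. exact (f_equal pb_quot E).
    + intros E. symmetry. apply pb_eq_off; [exact Np|exact (eq_sym E)].
  (* [q] outside [N], [p] inside: never, as [N] is an order-ideal *)
  - split; [|tauto]. intros E. exact (Nq (ideal_le pb_ideal_order_ideal (lhd_le E) Np)).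
  - split; [|tauto]. intros E. exact (Nq (ideal_le pb_ideal_order_ideal (lhd_le E) Np)).
  (* [q] inside [N], [p] outside: always, by absorption *)
  - split; [tauto|intros _]. exact (pb_absorbing Nq Np).
  - rewrite lhd_coords, Vp1, Vp2, Vq1, Vq2. unfold lhd at 2. rewrite add0. tauto.
  (* from different factors: never, a prime is nonzero *)
  - rewrite lhd_coords, Vp1, Vq1. split; [|tauto]. intros [H _].
    apply lhd_zero in H. exact (prime_nonzero (proj2 (proj2_sig a')) H).
  (* [q] inside [N], [p] outside: always, by absorption *)
  - split; [tauto|intros _]. exact (pb_absorbing Nq Np).
  - rewrite lhd_coords, Vp2, Vq2. split; [|tauto]. intros [_ H].
    apply lhd_zero in H. exact (prime_nonzero (proj2 (proj2_sig b')) H).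
  - rewrite lhd_coords, Vp1, Vp2, Vq1, Vq2. unfold lhd at 1. rewrite add0. tauto.
Qed.

End Pullback.

Theorem mainTheorem12
  (M1 M2 S : cmonoid) (N1 : M1 -> Prop) (N2 : M2 -> Prop)
  (f1 : M1 -> S) (f2 : M2 -> S)
  (hM1 : primitive M1) (hM2 : primitive M2)
  (hN1 : order_ideal N1) (hN2 : order_ideal N2)
  (hf1 : is_hom f1) (hf2 : is_hom f2)
  (hq1 : quotient_map N1 f1) (hq2 : quotient_map N2 f2)
  (hlhd1 : forall p q : M1, prime p -> N1 p -> prime q -> ~ N1 q -> lhd p q)
  (hlhd2 : forall p q : M2, prime p -> N2 p -> prime q -> ~ N2 q -> lhd p q) :
  primitive (pullback hf1 hf2) /\
  exists (N : pullback hf1 hf2 -> Prop) (g : pullback hf1 hf2 -> S)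
         (psi : pullback hf1 hf2 -> prod_monoid M1 M2)
         (phi : { p : pullback hf1 hf2 | prime p } -> prime_pieces S N1 N2),
    order_ideal N /\
    sub_iso N (fun z : prod_monoid M1 M2 => N1 (fst z) /\ N2 (snd z)) psi /\
    quotient_map N g /\
    (exists phi_inv : prime_pieces S N1 N2 -> { p : pullback hf1 hf2 | prime p },
        (forall p, phi_inv (phi p) = p) /\ (forall x, phi (phi_inv x) = x)) /\
    (forall p, match phi p with
               | inl s => ~ N (proj1_sig p) /\ g (proj1_sig p) = proj1_sig s
               | inr (inl a) => N (proj1_sig p) /\
                                psi (proj1_sig p) = (proj1_sig a, zero)
               | inr (inr b) => N (proj1_sig p) /\
                                psi (proj1_sig p) = (zero, proj1_sig b)
               end) /\
    (forall p q, lhd (proj1_sig q) (proj1_sig p) <-> glued_lhd (phi q) (phi p)).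
Proof.
  split; [exact (pb_primitive hM1 hM2 hN1 hN2 hf1 hf2 hq1 hq2 hlhd1 hlhd2)|].
  exists (@pb_ideal _ _ _ N1 N2 _ _ hf1 hf2), (@pb_quot _ _ _ _ _ hf1 hf2),
    (@pb_pair _ _ _ _ _ hf1 hf2), (phi hM1 hM2 hN1 hN2 hq1 hq2 hlhd1 hlhd2).
  split; [exact (pb_ideal_order_ideal hN1 hN2 hf1 hf2)|].
  split; [exact (pb_sub_iso hN1 hN2 hf1 hf2 hq1 hq2)|].
  split; [exact (pb_quotient hM1 hM2 hN1 hN2 hf1 hf2 hq1 hq2 hlhd1 hlhd2)|].
  split; [exists (phi_inv hM1 hM2 hN1 hN2 hf1 hf2 hq1 hq2 hlhd1 hlhd2); split|split].
  - exact (phi_inv_phi hM1 hM2 hN1 hN2 hq1 hq2 hlhd1 hlhd2).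
  - exact (phi_phi_inv hM1 hM2 hN1 hN2 hf1 hf2 hq1 hq2 hlhd1 hlhd2).
  - exact (phi_spec hM1 hM2 hN1 hN2 hq1 hq2 hlhd1 hlhd2).
  - exact (phi_lhd hM1 hM2 hN1 hN2 hq1 hq2 hlhd1 hlhd2).
Qed.
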